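(* Let $t$ be a well-behaved behavior. Then the set $\partial_{\simeq} t$ of dissimilar descendants of $t$ is finite; equivalently, the set of descendants of $t$ contains only finitely many $\simeq$-equivalence classes.
   Context: Let $\Sigma$ be a finite alphabet. Behaviors are the terms generated by $r,s ::= \phi \mid \varepsilon \mid x\ (x\in\Sigma) \mid r+s \mid r\cdot s \mid r^* \mid \mathrm{fork}(r)$. For words $v,w\in\Sigma^*$ the shuffle $v\| w\subseteq \Sigma^*$ is defined by $\varepsilon\|w=\{w\}$, $v\|\varepsilon=\{v\}$, $xv\|yw=\{x\}\cdot(v\|yw)\cup\{y\}\cdot(xv\|w)$ for $x,y\in\Sigma$, and it is lifted to languages by $L\|M=\bigcup_{v\in L,w\in M} v\|w$; $L\cdot M$ denotes concatenation of languages. For $K\subseteq\Sigma^*$ the trace language $L(r,K)\subseteq\Sigma^*$ is defined by structural recursion: $L(\phi,K)=\emptyset$, $L(\varepsilon,K)=K$, $L(x,K)=\{x\}\cdot K$, $L(r+s,K)=L(r,K)\cup L(s,K)$, $L(r\cdot s,K)=L(r,L(s,K))$, $L(r^*,K)$ is the least fixpoint (w.r.t. $\subseteq$) of the monotone map $X\mapsto L(r,X)\cup K$, and $L(\mathrm{fork}(r),K)=L(r)\|K$, where $L(r)=L(r,\{\varepsilon\})$. Semantic containment: $r\sqsubseteq s$ iff $L(r,K)\subseteq L(s,K)$ for all $K\subseteq\Sigma^*$. The concurrent part $\mathcal C(r)$ is the behavior defined by: $\mathcal C(\phi)=\phi$, $\mathcal C(\varepsilon)=\varepsilon$, $\mathcal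 C(x)=\phi$, $\mathcal C(r+s)=\mathcal C(r)+\mathcal C(s)$, $\mathcal C(r\cdot s)=\mathcal C(r)\cdot\mathcal C(s)$, $\mathcal C(r^* )=\mathcal C(r)^*$, $\mathcal C(\mathrm{fork}(r))=\mathrm{fork}(r)$. The derivative $\partial_x r$ of a behavior $r$ by $x\in\Sigma$ is the behavior defined by: $\partial_x\phi=\phi$, $\partial_x\varepsilon=\phi$, $\partial_x y=\varepsilon$ if $y=x$ and $\phi$ otherwise, $\partial_x(r+s)=\partial_x r+\partial_x s$, $\partial_x(r\cdot s)=\partial_x r\cdot s+\mathcal C(r)\cdot\partial_x s$, $\partial_x(r^* )=\partial_x r\cdot r^*$, $\partial_x(\mathrm{fork}(r))=\mathrm{fork}(\partial_x r)$; it is extended to words by $\partial_\varepsilon r=r$ and $\partial_{xw}r=\partial_w(\partial_x r)$. A descendant of $r$ is any behavior $\partial_w r$ with $w\in\Sigma^*$; $\partial r$ denotes the set of descendants of $r$. Similarity $\simeq$ is the smallest relation on behaviors that is reflexive, symmetric, transitive, closed under contexts (if $s\simeq t$ then $E[s]\simeq E[t]$ for every context $E ::= [\,] \mid E^* \mid E\cdot s \mid r\cdot E \mid E+s \mid r+E \mid \mathrm{fork}(E)$, where $E[t]$ replaces the hole by $t$), and contains the axioms $r+(s+t)\simeq(r+s)+t$, $r+s\simeq s+r$, $r+r\simeq r$, $r+\phi\simeq r$, $\phi+r\simeq r$, $\varepsilon\cdot r\simeq r$, $r\cdot\varepsilon\simeq r$, $\varepsilon^*\simeq\varepsilon$, $\mathrm{fork}(\varepsilon)\simeq\varepsilon$,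 $\phi\cdot r\simeq\phi$, $r\cdot\phi\simeq\phi$, $\phi^*\simeq\varepsilon$, $\mathrm{fork}(\phi)\simeq\phi$. The set of dissimilar descendants $\partial_{\simeq} r$ is a set containing exactly one (arbitrarily chosen) representative of each $\simeq$-equivalence class of elements of $\partial r$. A behavior $t$ is well-behaved if every subterm of $t$ of the form $r^*$ satisfies $\mathcal C(\partial_w r)\sqsubseteq\varepsilon$ for all $w\in\Sigma^*$. *)

From mathcomp Require Import all_boot.

Set Implicit Arguments.
Unset Strict Implicit.
Unset Printing Implicit Defensive.

Section Behaviors.
Variable S : finType.

Inductive beh : Type :=
| Phi : beh
| Eps : beh
| Sym : S -> beh
| Plus : beh -> beh -> beh
| Seq : beh -> beh -> beh
| Star : beh -> beh
| Fork : beh -> beh.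

Definition lang := seq S -> Prop.

Inductive shuffle : seq S -> seq S -> seq S -> Prop :=
| shuffle_nil_l w : shuffle [::] w w
| shuffle_nil_r v : shuffle v [::] v
| shuffle_left x y v w u :
    shuffle v (y :: w) u -> shuffle (x :: v) (y :: w) (x :: u)
| shuffle_right x y v w u :
    shuffle (x :: v) w u -> shuffle (x :: v) (y :: w) (y :: u).

Definition eps_lang : lang := fun w => w = [::].

(* trace language L(r, K); the star case is the least fixpoint of
   X |-> L(r,X) \cup K, given as the intersection of all its prefixpoints *)
Fixpoint L (r : beh) (K : lang) : lang :=
  match r with
  | Phi => fun _ => False
  | Eps => K
  | Sym x => fun w => exists v, w = x :: v /\ K v
  | Plus r1 r2 => fun w => L r1 K w \/ L r2 K w
  | Seq r1 r2 => L r1 (L r2 K)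
  | Star r1 => fun w => forall X : lang,
        (forall v, L r1 X v \/ K v -> X v) -> X w
  | Fork r1 => fun u => exists v w,
        L r1 eps_lang v /\ K w /\ shuffle v w u
  end.

Definition contained (r s : beh) : Prop :=
  forall (K : lang) (w : seq S), L r K w -> L s K w.

Fixpoint conc (r : beh) : beh :=
  match r with
  | Phi => Phi
  | Eps => Eps
  | Sym _ => Phi
  | Plus r1 r2 => Plus (conc r1) (conc r2)
  | Seq r1 r2 => Seq (conc r1) (conc r2)
  | Star r1 => Star (conc r1)
  | Fork r1 => Fork r1
  end.

Fixpoint deriv (x : S) (r : beh) : beh :=
  match r with
  | Phi => Phi
  | Eps => Phi
  | Sym y => if y == x then Eps else Phi
  | Plus r1 r2 => Plus (deriv x r1) (deriv x r2)
  | Seq r1 r2 => Plus (Seq (deriv x r1) r2) (Seq (conc r1) (deriv x r2))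
  | Star r1 => Seq (deriv x r1) (Star r1)
  | Fork r1 => Fork (deriv x r1)
  end.

Fixpoint deriv_word (w : seq S) (r : beh) : beh :=
  match w with
  | [::] => r
  | x :: w' => deriv_word w' (deriv x r)
  end.

Definition descendant (r r' : beh) : Prop :=
  exists w : seq S, r' = deriv_word w r.

Inductive ctx : Type :=
| CHole : ctx
| CStar : ctx -> ctx
| CSeqL : ctx -> beh -> ctx
| CSeqR : beh -> ctx -> ctx
| CPlusL : ctx -> beh -> ctx
| CPlusR : beh -> ctx -> ctx
| CFork : ctx -> ctx.

Fixpoint plug (E : ctx) (t : beh) : beh :=
  match E with
  | CHole => t
  | CStar E' => Star (plug E' t)
  | CSeqL E' s => Seq (plug E' t) s
  | CSeqR r E' => Seq r (plug E' t)
  | CPlusL E' s => Plus (plug E' t) s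
  | CPlusR r E' => Plus r (plug E' t)
  | CFork E' => Fork (plug E' t)
  end.

Inductive sim : beh -> beh -> Prop :=
| sim_refl r : sim r r
| sim_sym r s : sim r s -> sim s r
| sim_trans r s t : sim r s -> sim s t -> sim r t
| sim_ctx E s t : sim s t -> sim (plug E s) (plug E t)
| sim_plusA r s t : sim (Plus r (Plus s t)) (Plus (Plus r s) t)
| sim_plusC r s : sim (Plus r s) (Plus s r)
| sim_plusI r : sim (Plus r r) r
| sim_plus0r r : sim (Plus r Phi) r
| sim_plus0l r : sim (Plus Phi r) r
| sim_seq1l r : sim (Seq Eps r) r
| sim_seq1r r : sim (Seq r Eps) r
| sim_star1 : sim (Star Eps) Eps
| sim_fork1 : sim (Fork Eps) Eps
| sim_seq0l r : sim (Seq Phi r) Phi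
| sim_seq0r r : sim (Seq r Phi) Phi
| sim_star0 : sim (Star Phi) Eps
| sim_fork0 : sim (Fork Phi) Phi.

Inductive subterm : beh -> beh -> Prop :=
| sub_refl r : subterm r r
| sub_plusl u r s : subterm u r -> subterm u (Plus r s)
| sub_plusr u r s : subterm u s -> subterm u (Plus r s)
| sub_seql u r s : subterm u r -> subterm u (Seq r s)
| sub_seqr u r s : subterm u s -> subterm u (Seq r s)
| sub_star u r : subterm u r -> subterm u (Star r)
| sub_fork u r : subterm u r -> subterm u (Fork r).

Definition well_behaved (t : beh) : Prop :=
  forall r : beh, subterm (Star r) t ->
    forall w : seq S, contained (conc (deriv_word w r)) Eps.

End Behaviors.

From Pilot Require Import Defs.
From mathcomp Require Import all_boot.
From Stdlib Require List.
From Stdlib Require Import Classical.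

Set Implicit Arguments.
Unset Strict Implicit.
Unset Printing Implicit Defensive.

(* Finite families of behaviors closed under derivatives and concurrent parts,
   up to finite sums and similarity, are built by induction on [t].  The only
   delicate case is [r^*]: the derivatives of a descendant [a . r^*] of [r^*]
   contain [C(a) . d_x r . r^*], and well-behavedness forces [C(a)] to be
   similar to [phi] or [eps], so the descendants of [r^*] stay of the shape
   [d_w r . r^*] (similarly for [C(r)^*]).  Since a finite family has only
   finitely many sums of sublists, the descendants of [t] fall into finitely
   many similarity classes. *)

Fixpoint powerset (T : Type) (l : list T) : list (list T) :=
  match l with
  | nil => [:: nil]
  | x :: l' => List.app (List.map (cons x) (powerset l')) (powerset l')
  end.

Lemma powerset_incl (T : Type) (l A : list T) :
  List.In A (powerset l) -> List.incl A l.
Proof.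
elim: l A => [|x l IH] A /=; first by move=> [<-|[]].
move/(List.in_app_or _ _ _) => [/List.in_map_iff [A' [<- /IH HA']]|/IH HA].
- exact: List.incl_cons (List.in_eq _ _) (List.incl_tl x HA').
- exact: List.incl_tl.
Qed.

Lemma powerset_filter (T : Type) (P : T -> Prop) (l : list T) :
  exists A, List.In A (powerset l) /\
    forall x, List.In x A <-> List.In x l /\ P x.
Proof.
elim: l => [|y l [A [HA HP]]] /=.
  by exists nil; split; [left | move=> x; split => [[]|[[]]]].
case: (classic (P y)) => Py.
- exists (y :: A); split; first by apply: List.in_or_app; left; apply: List.in_map.
  move=> x /=; rewrite HP; split.
  + by case=> [<-|[]]; split; [left | | right |].
  + by case=> [[<-|?] ?]; [left | right].
- exists A; split; first by apply: List.in_or_app; right.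
  move=> x; rewrite HP; split; first by case; split; [right|].
  by case=> [[<-|?] ?].
Qed.

Section Finiteness.
Variable S : finType.
Notation B := (beh S).
Notation PHI := (Phi S).
Notation EPS := (Eps S).
Notation eps := (@eps_lang S).
Implicit Types (a b c e f q r s : B) (A F P : list B) (w : seq S).

Lemma sim_plus a a' b b' : sim a a' -> sim b b' -> sim (Plus a b) (Plus a' b').
Proof.
move=> Ha Hb; apply: sim_trans (sim_ctx (CPlusL (CHole S) b) Ha) _.
exact: (sim_ctx (CPlusR a' (CHole S)) Hb).
Qed.

Lemma sim_seq a a' b b' : sim a a' -> sim b b' -> sim (Seq a b) (Seq a' b').
Proof.
move=> Ha Hb; apply: sim_trans (sim_ctx (CSeqL (CHole S) b) Ha) _.
exact: (sim_ctx (CSeqR a' (CHole S)) Hb).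
Qed.

Lemma sim_star a a' : sim a a' -> sim (Star a) (Star a').
Proof. exact: (sim_ctx (CStar (CHole S))). Qed.

Lemma sim_fork a a' : sim a a' -> sim (Fork a) (Fork a').
Proof. exact: (sim_ctx (CFork (CHole S))). Qed.

Lemma conc_sim a b : sim a b -> sim (conc a) (conc b).
Proof.
elim=> {a b} /=; try by constructor.
  by move=> r s t _ Hrs _ Hst; apply: sim_trans Hrs Hst.
move=> E s t Hst IH; elim: E => /= [|E IHE|E IHE u|u E IHE|E IHE u|u E IHE|E _].
- by [].
- exact: sim_star.
- exact: sim_seq IHE (sim_refl _).
- exact: sim_seq (sim_refl _) IHE.
- exact: sim_plus IHE (sim_refl _).
- exact: sim_plus (sim_refl _) IHE.
- exact: sim_fork (sim_ctx E Hst).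
Qed.

Lemma deriv_sim x a b : sim a b -> sim (deriv x a) (deriv x b).
Proof.
elim=> {a b} /=; try by constructor.
- by move=> r s t _ Hrs _ Hst; apply: sim_trans Hrs Hst.
- move=> E s t Hst IH; elim: E => /= [|E IHE|E IHE u|u E IHE|E IHE u|u E IHE|E IHE].
  + by [].
  + exact: sim_seq IHE (sim_star (sim_ctx E Hst)).
  + apply: sim_plus; first exact: sim_seq IHE (sim_refl _).
    exact: sim_seq (conc_sim (sim_ctx E Hst)) (sim_refl _).
  + apply: sim_plus; first exact: sim_seq (sim_refl _) (sim_ctx E Hst).
    exact: sim_seq (sim_refl _) IHE.
  + exact: sim_plus IHE (sim_refl _).
  + exact: sim_plus (sim_refl _) IHE.
  + exact: sim_fork IHE.
- by move=> r; apply: sim_trans (sim_plus (sim_seq0l _) (sim_seq1l _)) (sim_plus0l _).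
- by move=> r; apply: sim_trans (sim_plus (sim_seq1r _) (sim_seq0r _)) (sim_plus0r _).
- by move=> r; apply: sim_trans (sim_plus (sim_seq0l _) (sim_seq0l _)) (sim_plus0l _).
- by move=> r; apply: sim_trans (sim_plus (sim_seq0r _) (sim_seq0r _)) (sim_plus0l _).
Qed.

Fixpoint big_plus A : B :=
  match A with nil => PHI | a :: A' => Plus a (big_plus A') end.

Lemma big_plus_app A A' :
  sim (Plus (big_plus A) (big_plus A')) (big_plus (List.app A A')).
Proof.
elim: A => [|a A IH] /=; first exact: sim_plus0l.
exact: sim_trans (sim_sym (sim_plusA _ _ _)) (sim_plus (sim_refl _) IH).
Qed.

Lemma big_plus_absorb a A :
  List.In a A -> sim (Plus a (big_plus A)) (big_plus A).
Proof.
elim: A => [|b A IH] //= [<-|/IH Ha].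
  exact: sim_trans (sim_plusA _ _ _) (sim_plus (sim_plusI _) (sim_refl _)).
apply: sim_trans (sim_plusA _ _ _) _.
apply: sim_trans (sim_plus (sim_plusC _ _) (sim_refl _)) _.
exact: sim_trans (sim_sym (sim_plusA _ _ _)) (sim_plus (sim_refl _) Ha).
Qed.

Lemma big_plus_incl A A' :
  List.incl A A' -> sim (Plus (big_plus A) (big_plus A')) (big_plus A').
Proof.
elim: A => [|a A IH] /= AA'; first exact: sim_plus0l.
have [Ha /IH HA] := List.incl_cons_inv AA'.
apply: sim_trans (sim_sym (sim_plusA _ _ _)) _.
exact: sim_trans (sim_plus (sim_refl _) HA) (big_plus_absorb Ha).
Qed.

Lemma big_plus_same_elems A A' :
  List.incl A A' -> List.incl A' A -> sim (big_plus A) (big_plus A').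
Proof.
move=> AA' A'A; apply: sim_trans (sim_sym (big_plus_incl A'A)) _.
exact: sim_trans (sim_plusC _ _) (big_plus_incl AA').
Qed.

Definition span F u := exists A, List.incl A F /\ sim u (big_plus A).

Definition closed_in F P :=
  forall f, List.In f P -> (forall x, span F (deriv x f)) /\ span F (conc f).

Definition closed F := closed_in F F.

Lemma span_phi F : span F PHI.
Proof. by exists nil; split; [apply: List.incl_nil_l | apply: sim_refl]. Qed.

Lemma span_mem F f : List.In f F -> span F f.
Proof.
move=> Ff; exists [:: f]; split; last exact: sim_sym (sim_plus0r _).
by move=> x [<-|[]].
Qed.

Lemma span_sim F u v : sim u v -> span F v -> span F u.
Proof. by move=> uv [A [AF vA]]; exists A; split; last exact: sim_trans uv vA. Qed.

Lemma span_plus F a b : span F a -> span F b -> span F (Plus a b).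
Proof.
move=> [A [AF Ha]] [A' [A'F Hb]]; exists (List.app A A'); split.
  exact: List.incl_app.
exact: sim_trans (sim_plus Ha Hb) (big_plus_app A A').
Qed.

Lemma span_incl F F' u : List.incl F F' -> span F u -> span F' u.
Proof. by move=> FF' [A [AF Hu]]; exists A; split; first exact: List.incl_tran FF'. Qed.

Lemma span_big_plus F A : List.incl A F -> span F (big_plus A).
Proof. by move=> AF; exists A; split; last exact: sim_refl. Qed.

Lemma span_powerset F u :
  span F u -> exists A, List.In A (powerset F) /\ sim u (big_plus A).
Proof.
move=> [A [AF Hu]]; have [A' [A'F HA']] := powerset_filter (fun x => List.In x A) F.
exists A'; split=> //; apply: sim_trans Hu (big_plus_same_elems _ _).
- by move=> x Ax; apply/HA'; split=> //; apply: AF.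
- by move=> x /HA' [].
Qed.

Section AdditiveMap.
Variable g : B -> B.
Hypothesis g_sim : forall a b, sim a b -> sim (g a) (g b).
Hypothesis g_plus : forall a b, g (Plus a b) = Plus (g a) (g b).
Hypothesis g_phi : g PHI = PHI.

Lemma span_additive F F' u :
  (forall f, List.In f F -> span F' (g f)) -> span F u -> span F' (g u).
Proof.
move=> gF [A [AF Hu]]; apply: span_sim (g_sim Hu) _.
elim: A AF {Hu} => [|a A IH] /= AF; first by rewrite g_phi; apply: span_phi.
have [Fa /IH HA] := List.incl_cons_inv AF.
by rewrite g_plus; apply: span_plus HA; apply: gF.
Qed.

End AdditiveMap.

Lemma span_deriv F u x : closed F -> span F u -> span F (deriv x u).
Proof. by move=> HF; apply: (span_additive (@deriv_sim x)) => // f /HF []. Qed.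

Lemma span_conc F u : closed F -> span F u -> span F (conc u).
Proof. by move=> HF; apply: (span_additive (@conc_sim)) => // f /HF []. Qed.

Lemma span_deriv_word F u w : closed F -> span F u -> span F (deriv_word w u).
Proof.
by move=> HF; elim: w u => [|x w IH] u Hu //=; apply/IH/span_deriv.
Qed.

Lemma closed_in_app F P P' :
  closed_in F P -> closed_in F P' -> closed_in F (List.app P P').
Proof. by move=> HP HP' f /(List.in_app_or _ _ _) [/HP | /HP']. Qed.

Lemma closed_in_incl F F' P : List.incl F F' -> closed_in F P -> closed_in F' P.
Proof.
move=> FF' HP f /HP [Hd Hc]; split; last exact: span_incl Hc.
by move=> x; apply: span_incl (Hd x).
Qed.

Definition trivial_beh e := sim e PHI \/ sim e EPS.

Lemma trivial_beh_sim a b : sim a b -> trivial_beh b -> trivial_beh a.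
Proof. by move=> ab [H|H]; [left | right]; apply: sim_trans ab H. Qed.

Lemma span_seq_trivial F c b : trivial_beh c -> span F b -> span F (Seq c b).
Proof.
case=> Hc Hb.
- exact: span_sim (sim_trans (sim_seq Hc (sim_refl _)) (sim_seq0l _)) (span_phi _).
- exact: span_sim (sim_trans (sim_seq Hc (sim_refl _)) (sim_seq1l _)) Hb.
Qed.

Lemma L_mono e (K1 K2 : lang S) :
  (forall v, K1 v -> K2 v) -> forall w, L e K1 w -> L e K2 w.
Proof.
elim: e K1 K2 => [||y|a IHa b IHb|a IHa b IHb|a IHa|a IHa] K1 K2 K12 w /=.
- by [].
- exact: K12.
- by case=> v [-> Hv]; exists v; split=> //; apply: K12.
- by case=> H; [left; apply: IHa H | right; apply: IHb H].
- by apply: IHa => v; apply: IHb.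
- move=> Hw X HX; apply: Hw => v [Hv|Hv]; apply: HX; first by left.
  by right; apply: K12.
- by case=> v [u [Hv [Hu Hs]]]; exists v, u; split=> //; split=> //; apply: K12.
Qed.

Lemma shuffle_cat (v z : seq S) : shuffle v z (v ++ z).
Proof.
elim: v => [|x v IH] /=; first exact: shuffle_nil_l.
case: z IH => [|y z] IH; first by rewrite cats0; apply: shuffle_nil_r.
exact: shuffle_left.
Qed.

Lemma shuffle_catr (v w u z : seq S) : shuffle v w u -> shuffle v (w ++ z) (u ++ z).
Proof.
elim=> /= {v w u} [w|v|x y v w u _ IH|x y v w u _ IH].
- exact: shuffle_nil_l.
- exact: shuffle_cat.
- exact: shuffle_left.
- exact: shuffle_right.
Qed.

Lemma L_catr e (K1 K2 : lang S) v :
  (forall u, K1 u -> K2 (u ++ v)) -> forall w, L e K1 w -> L e K2 (w ++ v).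
Proof.
elim: e K1 K2 => [||y|a IHa b IHb|a IHa b IHb|a IHa|a IHa] K1 K2 K12 w /=.
- by [].
- exact: K12.
- by case=> u [-> Hu]; exists (u ++ v); split=> //; apply: K12.
- by case=> H; [left; apply: IHa H | right; apply: IHb H].
- by apply: IHa => u; apply: IHb.
- move=> Hw X HX; apply: (Hw (fun u => X (u ++ v))) => u [Hu|Hu]; apply: HX.
    by left; apply: IHa Hu.
  by right; apply: K12.
- case=> u [z [Hu [Hz Hs]]]; exists u, (z ++ v); split=> //; split.
    exact: K12.
  exact: shuffle_catr.
Qed.

Lemma L_star_nil a : L (Star a) eps [::].
Proof. by move=> X HX; apply: HX; right. Qed.

Lemma L_star_of a w : L a eps w -> L (Star a) eps w.
Proof.
move=> Ha X HX; apply: (HX); left; apply: L_mono Ha => v ->.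
by apply: HX; right.
Qed.

Lemma L_fork_of a w : L a eps w -> L (Fork a) eps w.
Proof. by move=> Ha; exists w, [::]; split=> //; split=> //; apply: shuffle_nil_r. Qed.

Lemma L_seq_cat a b w v : L a eps w -> L b eps v -> L (Seq a b) eps (w ++ v).
Proof. by move=> Ha Hb; apply: L_catr Ha => u ->. Qed.

Lemma L_empty_sim_phi e : (forall w, ~ L e eps w) -> sim e PHI.
Proof.
elim: e => [||y|a IHa b IHb|a IHa b IHb|a IHa|a IHa] He.
- exact: sim_refl.
- by case: (He [::]).
- by case: (He [:: y]); exists [::].
- apply: sim_trans (sim_plus (IHa _) (IHb _)) (sim_plus0r _) => w H.
    by apply: (He w); left.
  by apply: (He w); right.
- case: (classic (exists v, L b eps v)) => [[v Hv]|Hb].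
    apply: sim_trans (sim_seq (IHa _) (sim_refl _)) (sim_seq0l _) => w Hw.
    exact: He _ (L_seq_cat Hw Hv).
  apply: sim_trans (sim_seq (sim_refl _) (IHb _)) (sim_seq0r _) => w Hw.
  by apply: Hb; exists w.
- by case: (He _ (@L_star_nil a)).
- apply: sim_trans (sim_fork (IHa _)) (sim_fork0 S) => w Hw.
  exact: He _ (L_fork_of Hw).
Qed.

(* The nontrivial case is [a . b]: if both factors have traces, each factor
   has only the empty trace, since its traces can be padded by a trace of the
   other factor. *)
Lemma L_eps_trivial e : (forall w, L e eps w -> w = [::]) -> trivial_beh e.
Proof.
elim: e => [||y|a IHa b IHb|a IHa b IHb|a IHa|a IHa] He.
- by left; apply: sim_refl.
- by right; apply: sim_refl.
- by have := He [:: y] (ex_intro _ [::] (conj erefl erefl)).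
- have [Ha|Ha] := IHa (fun w H => He w (or_introl H));
  have [Hb|Hb] := IHb (fun w H => He w (or_intror H)).
  + by left; apply: sim_trans (sim_plus Ha Hb) (sim_plus0r _).
  + by right; apply: sim_trans (sim_plus Ha Hb) (sim_plus0l _).
  + by right; apply: sim_trans (sim_plus Ha Hb) (sim_plus0r _).
  + by right; apply: sim_trans (sim_plus Ha Hb) (sim_plusI _).
- case: (classic (exists w, L a eps w)) => [[wa Hwa]|Ha]; last first.
    left; apply: sim_trans (sim_seq (L_empty_sim_phi _) (sim_refl _)) (sim_seq0l _).
    by move=> w Hw; apply: Ha; exists w.
  case: (classic (exists v, L b eps v)) => [[vb Hvb]|Hb]; last first.
    left; apply: sim_trans (sim_seq (sim_refl _) (L_empty_sim_phi _)) (sim_seq0r _).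
    by move=> w Hw; apply: Hb; exists w.
  have Ha w : L a eps w -> w = [::].
    move=> Hw; apply/nilP; move/nilP: (He _ (L_seq_cat Hw Hvb)).
    by rewrite cat_nilp => /andP[].
  have Hb v : L b eps v -> v = [::].
    move=> Hv; apply/nilP; move/nilP: (He _ (L_seq_cat Hwa Hv)).
    by rewrite cat_nilp => /andP[].
  have [Ha'|Ha'] := IHa Ha.
    by left; apply: sim_trans (sim_seq Ha' (sim_refl _)) (sim_seq0l _).
  have [Hb'|Hb'] := IHb Hb.
    by left; apply: sim_trans (sim_seq (sim_refl _) Hb') (sim_seq0r _).
  by right; apply: sim_trans (sim_seq Ha' Hb') (sim_seq1l _).
- by right; case: (IHa (fun w H => He w (L_star_of H))) => Ha;
    apply: sim_trans (sim_star Ha) _; constructor.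
- case: (IHa (fun w H => He w (L_fork_of H))) => Ha; [left | right];
    by apply: sim_trans (sim_fork Ha) _; constructor.
Qed.

Lemma contained_eps_trivial e : contained e EPS -> trivial_beh e.
Proof. by move=> He; apply: L_eps_trivial => w; apply: He. Qed.

Lemma contained_trans a b c : contained a b -> contained b c -> contained a c.
Proof. by move=> ab bc K w /ab /bc. Qed.

Inductive pruning : B -> B -> Prop :=
| pruning_phi e : pruning PHI e
| pruning_refl e : pruning e e
| pruning_plus a a' b b' : pruning a a' -> pruning b b' -> pruning (Plus a b) (Plus a' b')
| pruning_seq a a' b b' : pruning a a' -> pruning b b' -> pruning (Seq a b) (Seq a' b')
| pruning_star a a' : pruning a a' -> pruning (Star a) (Star a')
| pruning_fork a a' : pruning a a' -> pruning (Fork a) (Fork a').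

Lemma conc_pruning e : pruning (conc e) e.
Proof. by elim: e => /= *; constructor. Qed.

Lemma pruning_conc e e' : pruning e e' -> pruning (conc e) (conc e').
Proof. by elim=> /= *; constructor. Qed.

Lemma pruning_deriv x e e' : pruning e e' -> pruning (deriv x e) (deriv x e').
Proof.
elim=> /= {e e'}; try by constructor.
- move=> a a' b b' Ha Hxa Hb Hxb.
  by apply: pruning_plus; apply: pruning_seq => //; apply: pruning_conc.
- by move=> a a' Ha Hxa; apply: pruning_seq => //; apply: pruning_star.
Qed.

Lemma pruning_deriv_word w e e' :
  pruning e e' -> pruning (deriv_word w e) (deriv_word w e').
Proof. by elim: w e e' => //= x w IH e e' H; apply/IH/pruning_deriv. Qed.

Lemma pruning_contained e e' : pruning e e' -> contained e e'.
Proof.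
elim=> {e e'} [e|e|a a' b b' _ Ha _ Hb|a a' b b' _ Ha _ Hb|a a' _ Ha|a a' _ Ha]
  K w //=.
- by case=> H; [left; apply: Ha | right; apply: Hb].
- by move=> H; apply: Ha; apply: L_mono H => v; apply: Hb.
- by move=> H X HX; apply: H => v [H|H]; apply: HX; [left; apply: Ha | right].
- by case=> v [u [H1 [H2 H3]]]; exists v, u; split=> //; apply: Ha.
Qed.

Lemma conc_idem e : conc (conc e) = conc e.
Proof. by elim: e => //= [a -> b ->|a -> b ->|a ->]. Qed.

Lemma deriv_word_conc_contained w r :
  contained (conc (deriv_word w (conc r))) (conc (deriv_word w r)).
Proof. exact/pruning_contained/pruning_conc/pruning_deriv_word/conc_pruning. Qed.

Lemma deriv_word_rcons w x e : deriv_word (rcons w x) e = deriv x (deriv_word w e).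
Proof. by elim: w e => //= y w IH e. Qed.

Section StarFamily.
Variables (Fr : list B) (q : B).
Hypothesis closed_Fr : closed Fr.
Hypothesis span_q : span Fr q.
Hypothesis conc_deriv_word_q : forall w, contained (conc (deriv_word w q)) EPS.

Lemma star_family : exists P, List.In (Star q) P /\
  forall F, List.incl P F -> List.In (Star (conc q)) F -> closed_in F P.
Proof.
have [Lq [_ HLq]] := powerset_filter
  (fun A => exists w, sim (big_plus A) (deriv_word w q)) (powerset Fr).
exists (Star q :: List.map (fun A => Seq (big_plus A) (Star q)) Lq).
split=> [|F PF Fc]; first by left.
have reach a w : sim a (deriv_word w q) -> span F (Seq a (Star q)).
  move=> Ha; have [A [HA HqA]] := span_powerset (span_deriv_word w closed_Fr span_q).
  apply: span_sim (sim_seq (sim_trans Ha HqA) (sim_refl _)) (span_mem _).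
  apply: PF; right; apply: (List.in_map (fun A => Seq (big_plus A) (Star q))).
  by apply/HLq; split=> //; exists w; apply: sim_sym.
move=> f [<-|/List.in_map_iff [A [<- /HLq [_ [w Hw]]]]] /=.
  split; last exact: span_mem.
  by move=> x; apply: (reach _ [:: x]); apply: sim_refl.
have Hc : trivial_beh (conc (big_plus A)).
  exact: trivial_beh_sim (conc_sim Hw) (contained_eps_trivial (@conc_deriv_word_q w)).
split; last exact: span_seq_trivial Hc (span_mem Fc).
move=> x; apply: span_plus.
  by apply: (reach _ (rcons w x)); rewrite deriv_word_rcons; apply: deriv_sim.
by apply: span_seq_trivial Hc _; apply: (reach _ [:: x]); apply: sim_refl.
Qed.

End StarFamily.

Definition finitely_spanned t := exists F, closed F /\ span F t.

Lemma finitely_spanned_phi : finitely_spanned PHI.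
Proof. by exists nil; split; [move=> f [] | apply: span_phi]. Qed.

Lemma finitely_spanned_eps : finitely_spanned EPS.
Proof.
exists [:: EPS]; split; last by apply: span_mem; left.
move=> f [<-|[]]; split; first by move=> x; apply: span_phi.
by apply: span_mem; left.
Qed.

Lemma finitely_spanned_sym y : finitely_spanned (Sym y).
Proof.
exists [:: Sym y; EPS]; split; last by apply: span_mem; left.
have eps_in : span [:: Sym y; EPS] EPS by apply: span_mem; right; left.
move=> f [<-|[<-|[]]] /=; (split; [move=> x|]) => //; try exact: span_phi.
by case: (y == x); [apply: eps_in | apply: span_phi].
Qed.

Lemma finitely_spanned_plus r s :
  finitely_spanned r -> finitely_spanned s -> finitely_spanned (Plus r s).
Proof.
move=> [Fr [HFr Hr]] [Fs [HFs Hs]].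
have Ir := List.incl_appl Fs (List.incl_refl Fr).
have Is := List.incl_appr Fr (List.incl_refl Fs).
exists (List.app Fr Fs); split; last exact: span_plus (span_incl Ir Hr) (span_incl Is Hs).
exact: closed_in_app (closed_in_incl Ir HFr) (closed_in_incl Is HFs).
Qed.

Lemma finitely_spanned_seq r s :
  finitely_spanned r -> finitely_spanned s -> finitely_spanned (Seq r s).
Proof.
move=> [Fr [HFr Hr]] [Fs [HFs Hs]].
pose F := List.flat_map (fun A =>
  List.map (fun A' => Seq (big_plus A) (big_plus A')) (powerset Fs)) (powerset Fr).
have span_Seq a b : span Fr a -> span Fs b -> span F (Seq a b).
  move=> /span_powerset [A [HA Ha]] /span_powerset [A' [HA' Hb]].
  apply: span_sim (sim_seq Ha Hb) (span_mem _).
  apply/List.in_flat_map; exists A; split=> //.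
  exact: (List.in_map (fun A' => Seq (big_plus A) (big_plus A'))).
exists F; split; last exact: span_Seq.
move=> f /List.in_flat_map [A [/powerset_incl/span_big_plus HA]].
move=> /List.in_map_iff [A' [<- /powerset_incl/span_big_plus HA']] /=.
split; last exact: span_Seq (span_conc HFr HA) (span_conc HFs HA').
move=> x; apply: span_plus; first exact: span_Seq (span_deriv x HFr HA) HA'.
exact: span_Seq (span_conc HFr HA) (span_deriv x HFs HA').
Qed.

Lemma finitely_spanned_fork r : finitely_spanned r -> finitely_spanned (Fork r).
Proof.
move=> [Fr [HFr Hr]].
pose F := List.map (fun A => Fork (big_plus A)) (powerset Fr).
have span_Fork a : span Fr a -> span F (Fork a).
  move=> /span_powerset [A [HA Ha]].
  apply: span_sim (sim_fork Ha) (span_mem _).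
  exact: (List.in_map (fun A => Fork (big_plus A))).
exists F; split; last exact: span_Fork.
move=> f /List.in_map_iff [A [<- /powerset_incl/span_big_plus HA]] /=.
split; last exact: span_Fork.
by move=> x; apply/span_Fork/span_deriv.
Qed.

Lemma finitely_spanned_star r : finitely_spanned r ->
  (forall w, contained (conc (deriv_word w r)) EPS) -> finitely_spanned (Star r).
Proof.
move=> [Fr [HFr Hr]] Hw.
have [P1 [S1 H1]] := star_family HFr Hr Hw.
have [P2 [S2 H2]] := star_family HFr (span_conc HFr Hr)
  (fun w => contained_trans (@deriv_word_conc_contained w r) (Hw w)).
have I1 := List.incl_appl P2 (List.incl_refl P1).
have I2 := List.incl_appr P1 (List.incl_refl P2).
exists (List.app P1 P2); split; last exact/span_mem/I1.
apply: closed_in_app; first exact: H1 I1 (I2 _ S2).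
by apply: (H2 _ I2); rewrite conc_idem; apply: I2.
Qed.

Lemma subterm_trans a b c : subterm a b -> subterm b c -> subterm a c.
Proof. by move=> ab bc; elim: bc ab => // *; constructor; auto. Qed.

Lemma well_behaved_subterm (u t : B) : subterm u t -> well_behaved t -> well_behaved u.
Proof. by move=> ut Ht r ru; apply: Ht; apply: subterm_trans ru ut. Qed.

Lemma well_behaved_finitely_spanned t : well_behaved t -> finitely_spanned t.
Proof.
elim: t => [||y|r IHr s IHs|r IHr s IHs|r IHr|r IHr] Ht.
- exact: finitely_spanned_phi.
- exact: finitely_spanned_eps.
- exact: finitely_spanned_sym.
- by apply: finitely_spanned_plus; [apply: IHr | apply: IHs];
    apply: well_behaved_subterm Ht; do 2 constructor.
- by apply: finitely_spanned_seq; [apply: IHr | apply: IHs];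
    apply: well_behaved_subterm Ht; do 2 constructor.
- apply: finitely_spanned_star (Ht r (Pilot.Defs.sub_refl _)); apply: IHr.
  by apply: well_behaved_subterm Ht; do 2 constructor.
- by apply/finitely_spanned_fork/IHr; apply: well_behaved_subterm Ht; do 2 constructor.
Qed.

Lemma choose_representatives t C : exists reps,
  (forall r, List.In r reps -> descendant t r) /\
  forall w c, List.In c C -> sim (deriv_word w t) c ->
    exists r, List.In r reps /\ sim (deriv_word w t) r.
Proof.
elim: C => [|c C [reps [Hreps HC]]]; first by exists nil.
case: (classic (exists w0, sim (deriv_word w0 t) c)) => [[w0 Hw0]|Hc].
  exists (deriv_word w0 t :: reps); split.
    by move=> r [<-|/Hreps]; [exists w0 |].
  move=> w c' [<-|/HC HC'] Hwc; first by exists (deriv_word w0 t); split;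
    [left | apply: sim_trans Hwc (sim_sym Hw0)].
  by have [r [Hr Hwr]] := HC' _ Hwc; exists r; split; [right |].
exists reps; split=> // w c' [<-|/HC HC'] Hwc; last exact: HC' _ Hwc.
by case: Hc; exists w.
Qed.

End Finiteness.

Theorem theorem6 (S : finType) (t : beh S) :
  well_behaved t ->
  exists reps : seq (beh S),
    (forall r, List.In r reps -> descendant t r) /\
    (forall w : seq S, exists r, List.In r reps /\ sim (deriv_word w t) r).
Proof.
move=> /well_behaved_finitely_spanned [F [HF Ht]].
have [reps [Hdesc Hreps]] := choose_representatives t (List.map (@big_plus S) (powerset F)).
exists reps; split=> // w.
have [A [HA HwA]] := span_powerset (span_deriv_word w HF Ht).
exact: Hreps w _ (List.in_map _ _ _ HA) HwA.
Qed.
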